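(* Let $B$ be a real $Q\times Q$ matrix that is symmetric, positive definite, and satisfies $B_{pq}\le0$ for $p\ne q$, and assume $\rho\in\mathcal R(\mathcal S^e,\pi^e,e\in\mathcal E)$. Let $(t_c)_{c\ge1}$ be an increasing unbounded sequence of times with $\lim_{c\to\infty}X(t_c)/t_c=\eta\ne0$. Let $(s_c)_{c\ge1}$ be times satisfying: 1. $s_c<t_c$ for each $c$, and $\lim_{c\to\infty}(t_c-s_c)/t_c=\epsilon\in(0,1)$; 2. for each $c$ and almost every $t\in(s_c,t_c]$, the applied service vector satisfies $\langle S(t),B\eta\rangle=\max_{S'\in\mathcal S^{e(t)}}\langle S',B\eta\rangle$. Then there is a subsequence $(s_d)$ of $(s_c)$ along which $X(s_d)/s_d\to\psi$ for some $\psi\in\mathbb R^Q_{\ge0}$ with $\langle\psi,B\eta\rangle>\langle\eta,B\eta\rangle$ and $\langle\psi,B\psi\rangle>\langle\eta,B\eta\rangle$. In particular, $$\limsup_{t\to\infty}\Big\langle\frac{X(t)}{t},B\frac{X(t)}{t}\Big\rangle>\langle\eta,B\eta\rangle .$$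
   Context: Fix integers $Q\ge1$ and $E\ge1$; queues are indexed by $q\in\mathcal Q=\{1,\dots,Q\}$ and environment states by $e\in\mathcal E=\{1,\dots,E\}$. For each $e$, $\mathcal S^e\subset\mathbb R^Q$ is a finite nonempty complete set of service vectors (components may be negative). Complete means that if $S\in\mathcal S^e$ and $S_q>0$, then replacing $S_q$ by $0$ gives a vector in $\mathcal S^e$. An environment trace is a measurable map $e:[0,\infty)\to\mathcal E$ with time proportions $\pi^e=\lim_{t\to\infty}\frac1t\int_0^t\mathbf 1\{e(z)=e\}\,dz>0$, where $\sum_e\pi^e=1$. The cumulative arrival $N(t)\in\mathbb R^Q_{\ge0}$ is componentwise nondecreasing with left limits, with traffic load $\rho=\lim_{t\to\infty}N(t)/t$. A schedule is a measurable map $S:[0,\infty)\to\mathbb R^Q$ with $S(t)\in\mathcal S^{e(t)}$. The workload is $X(t)=X(0)+N(t)-\int_0^tS(z)\,dz\ge0$. The stability region is $$\mathcal R(\mathcal S^e,\pi^e,e\in\mathcal E)=\Big\{\rho\in\mathbb R^Q_{\ge0}:\rho\le\sum_e\pi^e\sum_{S\in\mathcal S^e}\phi^e_SS \text{ for some } \phi^e_S\ge0,\ \sum_{S\in\mathcal S^e}\phi^e_S=1\Big\},$$ where the inequality is componentwise. *)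

From Stdlib Require Import Reals Lra List.
Open Scope R_scope.

(* Vectors in R^Q are functions nat -> R; only indices q < Q matter. *)
Fixpoint fsum (n : nat) (f : nat -> R) : R :=
  match n with O => 0 | S n' => fsum n' f + f n' end.

Definition dot (Q : nat) (x y : nat -> R) : R := fsum Q (fun q => x q * y q).

Definition mulmv (Q : nat) (B : nat -> nat -> R) (x : nat -> R) : nat -> R :=
  fun p => fsum Q (fun q => B p q * x q).

Definition outer_le (A : R -> Prop) (m : R) : Prop :=
  forall eps, 0 < eps ->
  exists a b : nat -> R,
    (forall n, a n <= b n) /\
    (forall x, A x -> exists n, a n <= x <= b n) /\
    (forall N, sum_f_R0 (fun n => b n - a n) N <= m + eps).

Definition is_outer (A : R -> Prop) (m : R) : Prop :=
  outer_le A m /\ forall m', outer_le A m' -> m <= m'.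

(* Caratheodory measurability (test sets of infinite outer measure satisfy the
   criterion trivially, so only finite ones are tested). *)
Definition measurable (A : R -> Prop) : Prop :=
  forall (T : R -> Prop) mT mA mB,
    is_outer T mT ->
    is_outer (fun x => T x /\ A x) mA ->
    is_outer (fun x => T x /\ ~ A x) mB ->
    mT = mA + mB.

Definition has_measure (A : R -> Prop) (m : R) : Prop :=
  measurable A /\ is_outer A m.

Definition null (A : R -> Prop) : Prop := outer_le A 0.

(* Lebesgue integral over (a,b] of a finitely-valued function f, as a simple
   function: I = sum over its values v of v * Leb{z in (a,b] | f z = v}.
   (The hypotheses require the level sets to be measurable.) *)
Definition simple_integral (f : R -> R) (a b I : R) : Prop :=
  exists L : list (R * R),
    NoDup (map fst L) /\
    (forall z, a < z <= b -> In (f z) (map fst L)) /\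
    (forall p, In p L -> has_measure (fun z => a < z <= b /\ f z = fst p) (snd p)) /\
    I = fold_right (fun p acc => fst p * snd p + acc) 0 L.

Definition lim_infty (f : R -> R) (l : R) : Prop :=
  forall eps, 0 < eps -> exists T, forall t, T <= t -> Rabs (f t - l) < eps.

Definition inS (Q : nat) (L : list (nat -> R)) (v : nat -> R) : Prop :=
  exists w, In w L /\ forall q, (q < Q)%nat -> v q = w q.

Definition complete (Q : nat) (L : list (nat -> R)) : Prop :=
  forall v, In v L -> forall q, (q < Q)%nat -> 0 < v q ->
    inS Q L (fun p => if Nat.eqb p q then 0 else v p).

Definition in_region (Q E : nat) (Sset : nat -> list (nat -> R)) (pi : nat -> R)
  (rho : nat -> R) : Prop :=
  (forall q, (q < Q)%nat -> 0 <= rho q) /\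
  exists phi : nat -> nat -> R,
    (forall k i, (k < E)%nat -> (i < length (Sset k))%nat -> 0 <= phi k i) /\
    (forall k, (k < E)%nat -> fsum (length (Sset k)) (phi k) = 1) /\
    (forall q, (q < Q)%nat ->
       rho q <= fsum E (fun k => pi k *
                  fsum (length (Sset k)) (fun i => phi k i * nth i (Sset k) (fun _ => 0) q))).

(* limsup_{t -> oo} f t > a  (in the extended reals): there is b > a such that
   f t > b for arbitrarily large t. *)
Definition limsup_infty_gt (f : R -> R) (a : R) : Prop :=
  exists b, a < b /\ forall T, exists t, T <= t /\ b < f t.

From Pilot Require Import Defs.
From Stdlib Require Import Reals List Lra Lia ZArith Permutation.
From Stdlib Require Import Classical ClassicalEpsilon FunctionalExtensionality PropExtensionality.
Open Scope R_scope.

(* Put b = B eta and a = <eta, b> > 0.  On (s_c, t_c] the schedule maximizes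
   <S, b> over S^{e(z)} almost everywhere, so integrating the workload identity
   against b gives
     <X(t_c) - X(s_c), b> = <N(t_c) - N(s_c), b> - sum_e M_e Leb{z in (s_c,t_c] | e(z) = e},
   with M_e = max_{S in S^e} <S, b>.  Dividing by t_c and letting c -> oo,
     <X(s_c), b> / t_c  -->  L := a - eps <rho, b> + eps sum_e pi^e M_e  >=  a,
   where L >= a is the stability-region condition <rho, b> <= sum_e pi^e M_e
   (completeness lets negative coordinates of b be met by nonpositive service).
   Since X(s)/s is bounded, a subsequence X(s_d)/s_d converges to some psi >= 0,
   and then <psi, b> (1 - eps) = L >= a, so <psi, b> > a.  Positive
   semidefiniteness of B at psi - eta gives <psi, B psi> >= 2 <psi, b> - a > a,
   and the limsup claim follows along the times s_d.  (The sign condition on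
   the off-diagonal entries of B is not needed for this argument.) *)

Lemma pred_ext (A B : R -> Prop) : (forall z, A z <-> B z) -> A = B.
Proof. intros H. apply functional_extensionality. intros z. apply propositional_extensionality, H. Qed.

(* The Lebesgue outer measure of A, when A has a finite one. *)
Definition mu (A : R -> Prop) : R := epsilon (inhabits 0) (fun m => is_outer A m).

Definition finite_outer (A : R -> Prop) : Prop := exists m, outer_le A m.

Lemma outer_nonneg A m : outer_le A m -> 0 <= m.
Proof.
  intros H. destruct (Rle_lt_dec 0 m) as [h|h]; auto.
  destruct (H (- m / 2)) as [a [b [H1 [_ H3]]]]; [lra|].
  specialize (H3 O). simpl in H3. specialize (H1 O). lra.
Qed.

(* Finite outer measure exists: it is the infimum of the admissible bounds,
   obtained from the completeness of R. *)
Lemma outer_exists A m0 : outer_le A m0 -> exists m, is_outer A m.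
Proof.
  intros H0.
  set (U := fun x => outer_le A (- x)).
  assert (Hb : bound U) by (exists 0; intros x Hx; apply outer_nonneg in Hx; lra).
  assert (Hne : exists x, U x) by (exists (- m0); unfold U; rewrite Ropp_involutive; auto).
  destruct (completeness U Hb Hne) as [l [Hl1 Hl2]].
  exists (- l). split.
  - intros eps Heps.
    assert (exists x, U x /\ l - eps/2 < x) as [x [Ux Hx]].
    { apply NNPP. intro Hn. assert (l <= l - eps/2); [|lra].
      apply Hl2. intros x Ux. destruct (Rle_lt_dec x (l - eps/2)); auto.
      exfalso. apply Hn. exists x. split; auto. }
    destruct (Ux (eps/2)) as [a [b [h1 [h2 h3]]]]; [lra|].
    exists a, b. split; [auto|split;[auto|]]. intros N. specialize (h3 N). lra.
  - intros m' Hm'. assert (Ux : U (- m')) by (unfold U; rewrite Ropp_involutive; auto).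
    apply Hl1 in Ux. lra.
Qed.

Lemma mu_spec A : finite_outer A -> is_outer A (mu A).
Proof. intros [m Hm]. unfold mu. apply epsilon_spec. eapply outer_exists; eauto. Qed.

Lemma mu_eq A m : is_outer A m -> mu A = m.
Proof.
  intros H. assert (H' : is_outer A (mu A)) by (apply mu_spec; exists m; apply H).
  destruct H as [H1 H2]. destruct H' as [H1' H2']. apply Rle_antisym; auto.
Qed.

Lemma outer_mono (A B : R -> Prop) m : (forall z, A z -> B z) -> outer_le B m -> outer_le A m.
Proof.
  intros Hs H eps Heps. destruct (H eps Heps) as [a [b [h1 [h2 h3]]]].
  exists a, b. split; auto.
Qed.

Lemma finite_outer_mono (A B : R -> Prop) : (forall z, A z -> B z) -> finite_outer B -> finite_outer A.
Proof. intros Hs [m Hm]. exists m. eapply outer_mono; eauto. Qed.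

Lemma mu_le_outer A m : outer_le A m -> mu A <= m.
Proof. intros H. destruct (mu_spec A) as [_ H2]; [exists m; auto|]. auto. Qed.

Lemma mu_ge0 A : finite_outer A -> 0 <= mu A.
Proof. intros Hb. destruct (mu_spec A Hb) as [H1 _]. eapply outer_nonneg; eauto. Qed.

Lemma mu_null (A B : R -> Prop) : null A -> (forall z, B z -> A z) -> mu B = 0.
Proof.
  intros Hn Hs. assert (H : outer_le B 0) by (eapply outer_mono; eauto).
  apply Rle_antisym; [apply mu_le_outer; auto|apply mu_ge0; exists 0; auto].
Qed.

Lemma interval_outer (A : R -> Prop) a b : a <= b -> (forall z, A z -> a <= z <= b) -> outer_le A (b - a).
Proof.
  intros Hab Hs eps Heps.
  exists (fun n => match n with O => a | _ => 0 end), (fun n => match n with O => b | _ => 0 end).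
  split; [intros [|n]; lra|split].
  - intros x Hx. exists O. auto.
  - intros N. induction N; simpl; lra.
Qed.

Lemma finite_outer_interval (A : R -> Prop) a b : (forall z, A z -> a <= z <= b) -> finite_outer A.
Proof.
  intros Hs. destruct (Rle_lt_dec a b).
  - exists (b - a). apply interval_outer; auto.
  - exists 0. replace 0 with (a - a) by ring. apply interval_outer; [lra|].
    intros z Hz. apply Hs in Hz. lra.
Qed.

Lemma null_point (A : R -> Prop) x : (forall z, A z -> z = x) -> null A.
Proof.
  intros H. unfold null. replace 0 with (x - x) by ring. apply interval_outer; [lra|].
  intros z Hz. rewrite (H z Hz). lra.
Qed.

Lemma mu_empty (A : R -> Prop) : (forall z, ~ A z) -> mu A = 0.
Proof.
  intros H. apply (mu_null (fun _ => False)); [|intros z Hz; exact (H z Hz)].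
  apply (null_point _ 0). tauto.
Qed.

Lemma mu_split (P T : R -> Prop) : measurable P -> finite_outer T ->
  mu T = mu (fun z => T z /\ P z) + mu (fun z => T z /\ ~ P z).
Proof.
  intros HP Hb. apply (HP T); apply mu_spec; auto;
  apply (finite_outer_mono _ T); auto; simpl; tauto.
Qed.

Lemma measurable_intro (P : R -> Prop) : (forall T, finite_outer T ->
   mu T = mu (fun z => T z /\ P z) + mu (fun z => T z /\ ~ P z)) -> measurable P.
Proof.
  intros H T mT mA mB H1 H2 H3.
  rewrite <- (mu_eq _ _ H1), <- (mu_eq _ _ H2), <- (mu_eq _ _ H3).
  apply H. destruct H1 as [H1 _]. exists mT; auto.
Qed.

Lemma measurable_compl (P : R -> Prop) : measurable P -> measurable (fun z => ~ P z).
Proof.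
  intros HP. apply measurable_intro. intros T Hb. rewrite (mu_split P T HP Hb).
  replace (fun z => T z /\ ~ ~ P z) with (fun z => T z /\ P z); [ring|].
  apply pred_ext. intros z. split; intros [h1 h2]; split; auto. apply NNPP; auto.
Qed.

Lemma measurable_inter (A B : R -> Prop) : measurable A -> measurable B -> measurable (fun z => A z /\ B z).
Proof.
  intros HA HB. apply measurable_intro. intros T Hb.
  rewrite (mu_split A T HA Hb).
  rewrite (mu_split B (fun z => T z /\ A z) HB); [|eapply finite_outer_mono; eauto; simpl; tauto].
  rewrite (mu_split A (fun z => T z /\ ~ (A z /\ B z)) HA); [|eapply finite_outer_mono; eauto; simpl; tauto].
  replace (fun z => (T z /\ A z) /\ B z) with (fun z => T z /\ (A z /\ B z)) by (apply pred_ext; tauto).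
  replace (fun z => (T z /\ ~ (A z /\ B z)) /\ A z) with (fun z => (T z /\ A z) /\ ~ B z)
    by (apply pred_ext; tauto).
  replace (fun z => (T z /\ ~ (A z /\ B z)) /\ ~ A z) with (fun z => T z /\ ~ A z) by (apply pred_ext; tauto).
  ring.
Qed.

Lemma measurable_union (A B : R -> Prop) : measurable A -> measurable B -> measurable (fun z => A z \/ B z).
Proof.
  intros HA HB.
  replace (fun z => A z \/ B z) with (fun z => ~ (~ A z /\ ~ B z)).
  - apply measurable_compl, measurable_inter; apply measurable_compl; auto.
  - apply pred_ext. intros z. split; [intro H; apply NNPP; tauto|tauto].
Qed.

Lemma measurable_empty : measurable (fun _ => False).
Proof.
  apply measurable_intro. intros T Hb.
  rewrite (mu_empty (fun z => T z /\ False)) by tauto.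
  replace (fun z => T z /\ ~ False) with T by (apply pred_ext; tauto). ring.
Qed.

Lemma measurable_union_list {A : Type} (l : list A) (P : A -> R -> Prop) :
  (forall x, In x l -> measurable (P x)) -> measurable (fun z => exists x, In x l /\ P x z).
Proof.
  induction l as [|x l IH]; intros H.
  - replace (fun z => exists y, In y nil /\ P y z) with (fun _ : R => False).
    + apply measurable_empty.
    + apply pred_ext. intros z. split; [tauto|]. intros [y [[] _]].
  - replace (fun z => exists y, In y (x :: l) /\ P y z) with (fun z => P x z \/ exists y, In y l /\ P y z).
    + apply measurable_union; [apply H; simpl; auto|apply IH; intros; apply H; simpl; auto].
    + apply pred_ext. intros z. split.
      * intros [h|[y [h1 h2]]]; [exists x|exists y]; simpl; auto.
      * intros [y [[h1|h1] h2]]; [subst; auto|right; exists y; auto].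
Qed.


Definition lsum {A : Type} (F : A -> R) (l : list A) : R := fold_right (fun x acc => F x + acc) 0 l.

Lemma lsum_ext_in {A : Type} (F G : A -> R) l : (forall x, In x l -> F x = G x) -> lsum F l = lsum G l.
Proof. induction l; simpl; intros H; auto. rewrite H, IHl; auto. Qed.

Lemma lsum_plus {A : Type} (F G : A -> R) l : lsum (fun x => F x + G x) l = lsum F l + lsum G l.
Proof. induction l; simpl; [ring|]. rewrite IHl. ring. Qed.

Lemma lsum_scal {A : Type} c (F : A -> R) l : lsum (fun x => c * F x) l = c * lsum F l.
Proof. induction l; simpl; [ring|]. rewrite IHl. ring. Qed.

Lemma lsum_le {A : Type} (F G : A -> R) l : (forall x, In x l -> F x <= G x) -> lsum F l <= lsum G l.
Proof. induction l; simpl; intros H; [lra|]. apply Rplus_le_compat; auto. Qed.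

Lemma lsum_swap {A B : Type} (F : A -> B -> R) l1 l2 :
  lsum (fun x => lsum (fun y => F x y) l2) l1 = lsum (fun y => lsum (fun x => F x y) l1) l2.
Proof.
  induction l1; simpl.
  - induction l2; simpl; auto. rewrite <- IHl2. ring.
  - rewrite IHl1, <- lsum_plus. auto.
Qed.

Lemma lsum_perm {A : Type} (F : A -> R) l1 l2 : Permutation l1 l2 -> lsum F l1 = lsum F l2.
Proof. induction 1; simpl; auto; [rewrite IHPermutation; auto|ring|congruence]. Qed.

Lemma lsum_filter {A : Type} (F : A -> R) l (p : A -> bool) :
  (forall x, In x l -> p x = false -> F x = 0) -> lsum F l = lsum F (filter p l).
Proof.
  induction l; simpl; intros H; auto.
  destruct (p a) eqn:E; simpl; rewrite IHl; auto. rewrite H; auto. ring.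
Qed.

Lemma lsum_indep (F : R -> R) l1 l2 : NoDup l1 -> NoDup l2 ->
  (forall x, ~ In x l1 -> F x = 0) -> (forall x, ~ In x l2 -> F x = 0) ->
  lsum F l1 = lsum F l2.
Proof.
  set (inb := fun l x => if in_dec Req_EM_T x l then true else false).
  intros N1 N2 H1 H2.
  rewrite (lsum_filter F l1 (inb l2)).
  2:{ intros x _ h. unfold inb in h. destruct (in_dec Req_EM_T x l2); [discriminate|auto]. }
  rewrite (lsum_filter F l2 (inb l1)).
  2:{ intros x _ h. unfold inb in h. destruct (in_dec Req_EM_T x l1); [discriminate|auto]. }
  apply lsum_perm. apply NoDup_Permutation; try apply NoDup_filter; auto.
  intros x. rewrite !filter_In. unfold inb.
  destruct (in_dec Req_EM_T x l2); destruct (in_dec Req_EM_T x l1); intuition congruence.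
Qed.

Lemma lsum_app {A : Type} (F : A -> R) l1 l2 : lsum F (l1 ++ l2) = lsum F l1 + lsum F l2.
Proof. induction l1; simpl; [ring|]. rewrite IHl1. ring. Qed.

Lemma lsum_seq (F : nat -> R) n : lsum F (seq 0 n) = fsum n F.
Proof. induction n; [reflexivity|]. rewrite seq_S, lsum_app, IHn. simpl. ring. Qed.

Lemma lsum_abs_nonneg l : 0 <= lsum Rabs l.
Proof. induction l; simpl; [lra|]. pose proof (Rabs_pos a); lra. Qed.

Lemma lsum_abs_ge x l : In x l -> Rabs x <= lsum Rabs l.
Proof.
  induction l; simpl; [tauto|]. intros [e|H].
  - subst. pose proof (lsum_abs_nonneg l). lra.
  - pose proof (Rabs_pos a). specialize (IHl H). lra.
Qed.

Definition IntL (D : R -> Prop) (f : R -> R) (V : list R) : R :=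
  lsum (fun v => v * mu (fun z => D z /\ f z = v)) V.

Definition integral_is (D : R -> Prop) (f : R -> R) (I : R) : Prop :=
  forall W, NoDup W -> (forall z, D z -> In (f z) W) -> IntL D f W = I.

Definition simple_fun (f : R -> R) : Prop :=
  exists V, NoDup V /\ (forall z, 0 <= z -> In (f z) V) /\
    (forall v, measurable (fun z => 0 <= z /\ f z = v)).

Lemma IntL_indep D f V W : NoDup V -> NoDup W ->
  (forall z, D z -> In (f z) V) -> (forall z, D z -> In (f z) W) ->
  IntL D f V = IntL D f W.
Proof.
  intros NV NW CV CW. unfold IntL. apply lsum_indep; auto;
  intros x Hx; (rewrite mu_empty; [ring|]); intros z [Dz fz]; subst; apply Hx; auto.
Qed.

Lemma integral_unique D f I J : simple_fun f -> (forall z, D z -> 0 <= z) ->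
  integral_is D f I -> integral_is D f J -> I = J.
Proof.
  intros [V [NV [CV _]]] D0 HI HJ. rewrite <- (HI V), <- (HJ V); auto.
Qed.

(* Simple integrals from Defs are integrals in this sense, and their domain is
   measurable, being the union of the level sets. *)
Lemma simple_integral_is f a b I : simple_integral f a b I ->
  integral_is (fun z => a < z <= b) f I /\ measurable (fun z => a < z <= b).
Proof.
  intros [L [NL [CL [ML EI]]]]. split.
  - intros W NW CW. rewrite <- (IntL_indep _ _ (map fst L)); auto. subst I. clear NL CL CW.
    induction L as [|p L IH]; simpl; auto.
    unfold IntL in *. simpl. rewrite IH by (intros; apply ML; simpl; auto).
    f_equal. f_equal. apply mu_eq. apply ML. simpl; auto.
  - replace (fun z => a < z <= b) with (fun z => exists p, In p L /\ (a < z <= b /\ f z = fst p)).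
    + apply measurable_union_list. intros p Hp. apply ML; auto.
    + apply pred_ext. intros z. split; [intros [p [_ [h _]]]; auto|]. intros h.
      destruct (proj1 (in_map_iff fst L (f z)) (CL z h)) as [p [e Hp]]. exists p. auto.
Qed.

Lemma IntL_const D f V c : NoDup V -> (forall z, D z -> In (f z) V) ->
  (forall z, D z -> f z = c) -> IntL D f V = c * mu D.
Proof.
  intros NV CV Hc. destruct (classic (exists z, D z)) as [[z0 Dz0]|Hno].
  - rewrite (IntL_indep _ _ V (c :: nil)); [| |constructor; [simpl; tauto|constructor]| |]; auto.
    2:{ intros z Dz. rewrite Hc; simpl; auto. }
    unfold IntL. simpl. rewrite Rplus_0_r. f_equal. f_equal.
    apply pred_ext. intros z. split; [tauto|]. intros Dz; auto.
  - unfold IntL. rewrite mu_empty by (intros z Dz; eauto).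
    rewrite (lsum_ext_in _ (fun _ => 0 * 0)); [rewrite lsum_scal; ring|].
    intros v _. rewrite mu_empty; [ring|]. intros z [Dz _]. eauto.
Qed.

Lemma mu_part {A : Type} (g : R -> A) (Vg : list A) : NoDup Vg ->
  (forall w, In w Vg -> measurable (fun z => 0 <= z /\ g z = w)) ->
  forall D, (forall z, D z -> 0 <= z /\ In (g z) Vg) -> finite_outer D ->
  mu D = lsum (fun w => mu (fun z => D z /\ g z = w)) Vg.
Proof.
  induction Vg as [|w Vg IH]; intros N M D C B; simpl.
  - apply mu_empty. intros z Dz. destruct (C z Dz) as [_ []].
  - inversion N; subst.
    rewrite (mu_split _ D (M w (or_introl eq_refl)) B).
    replace (fun z => D z /\ 0 <= z /\ g z = w) with (fun z => D z /\ g z = w).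
    2:{ apply pred_ext. intros z. split; [intros [h1 h2]; split; auto; split; auto; apply C; auto|tauto]. }
    f_equal. rewrite IH; auto.
    + apply lsum_ext_in. intros w' Hw'. f_equal. apply pred_ext. intros z. split; [tauto|].
      intros [Dz gz]. split; auto. split; auto. intros [_ e]. subst. congruence.
    + intros; apply M; simpl; auto.
    + intros z [Dz Hn]. destruct (C z Dz) as [z0 [e|i]]; split; auto. exfalso; apply Hn; auto.
    + eapply finite_outer_mono; [|apply B]. simpl; tauto.
Qed.

Lemma IntL_part {A : Type} (g : R -> A) (Vg : list A) h V D : NoDup Vg ->
  (forall w, In w Vg -> measurable (fun z => 0 <= z /\ g z = w)) ->
  (forall z, D z -> 0 <= z /\ In (g z) Vg) -> finite_outer D ->
  IntL D h V = lsum (fun w => IntL (fun z => D z /\ g z = w) h V) Vg.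
Proof.
  intros N M C B. unfold IntL.
  rewrite (lsum_ext_in _ (fun v => lsum (fun w => v * mu (fun z => (D z /\ g z = w) /\ h z = v)) Vg)).
  - apply lsum_swap.
  - intros v _. rewrite lsum_scal. f_equal.
    rewrite (mu_part g Vg N M).
    + apply lsum_ext_in. intros w _. f_equal. apply pred_ext. tauto.
    + intros z [Dz _]. auto.
    + eapply finite_outer_mono; [|apply B]. simpl; tauto.
Qed.

Lemma integral_partition {A : Type} (g : R -> A) (Vg : list A) D f (I : A -> R) : NoDup Vg ->
  (forall w, In w Vg -> measurable (fun z => 0 <= z /\ g z = w)) ->
  (forall z, D z -> 0 <= z /\ In (g z) Vg) -> finite_outer D ->
  (forall w, In w Vg -> integral_is (fun z => D z /\ g z = w) f (I w)) ->
  integral_is D f (lsum I Vg).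
Proof.
  intros N M C B HI W NW CW. rewrite (IntL_part g Vg f W D N M C B).
  apply lsum_ext_in. intros w Hw. apply HI; auto. intros z [Dz _]; auto.
Qed.

Lemma integral_split P D f I J : simple_fun f -> (forall z, D z -> 0 <= z) ->
  measurable P -> finite_outer D ->
  integral_is D f I -> integral_is (fun z => D z /\ P z) f J ->
  integral_is (fun z => D z /\ ~ P z) f (I - J).
Proof.
  intros [V [NV [CV _]]] D0 HP B HI HJ W NW CW.
  assert (CD : forall E : R -> Prop, (forall z, E z -> D z) -> forall z, E z -> In (f z) V)
    by (intros E HE z Ez; apply CV, D0, HE, Ez).
  rewrite <- (IntL_indep _ _ V W NV NW) by (auto; apply CD; tauto).
  rewrite <- (HI V NV), <- (HJ V NV) by (apply CD; tauto).
  enough (E : IntL D f V = IntL (fun z => D z /\ P z) f V + IntL (fun z => D z /\ ~ P z) f V)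
    by lra.
  unfold IntL. rewrite <- lsum_plus. apply lsum_ext_in. intros v _.
  rewrite (mu_split P (fun z => D z /\ f z = v) HP) by (eapply finite_outer_mono; [|apply B]; simpl; tauto).
  rewrite Rmult_plus_distr_l. f_equal; f_equal; f_equal; apply pred_ext; tauto.
Qed.


Lemma fsum_ext n f g : (forall i, (i < n)%nat -> f i = g i) -> fsum n f = fsum n g.
Proof. induction n; simpl; intros H; auto. rewrite IHn, H; auto; intros; apply H; lia. Qed.

Lemma fsum_plus n f g : fsum n (fun i => f i + g i) = fsum n f + fsum n g.
Proof. induction n; simpl; [ring|]. rewrite IHn; ring. Qed.

Lemma fsum_minus n f g : fsum n (fun i => f i - g i) = fsum n f - fsum n g.
Proof. induction n; simpl; [ring|]. rewrite IHn; ring. Qed.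

Lemma fsum_scal n c f : fsum n (fun i => c * f i) = c * fsum n f.
Proof. induction n; simpl; [ring|]. rewrite IHn; ring. Qed.

Lemma fsum_scalr n c f : fsum n (fun i => f i * c) = fsum n f * c.
Proof. induction n; simpl; [ring|]. rewrite IHn; ring. Qed.

Lemma fsum_le n f g : (forall i, (i < n)%nat -> f i <= g i) -> fsum n f <= fsum n g.
Proof.
  induction n; simpl; intros H; [lra|].
  apply Rplus_le_compat; [apply IHn|apply H]; intros; try apply H; lia.
Qed.

Lemma fsum_zero n f : (forall i, (i < n)%nat -> f i = 0) -> fsum n f = 0.
Proof.
  intros H. rewrite (fsum_ext n f (fun _ => 0)); auto. clear H.
  induction n; simpl; auto. rewrite IHn; ring.
Qed.

Lemma fsum_nonpos n f : (forall i, (i < n)%nat -> f i <= 0) -> fsum n f <= 0.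
Proof. intros H. rewrite <- (fsum_zero n (fun _ => 0)) by auto. apply fsum_le. auto. Qed.

Lemma fsum_swap n m (f : nat -> nat -> R) :
  fsum n (fun i => fsum m (fun j => f i j)) = fsum m (fun j => fsum n (fun i => f i j)).
Proof.
  induction n; simpl.
  - symmetry. apply fsum_zero. auto.
  - rewrite IHn, <- fsum_plus. auto.
Qed.

Lemma simple_fun_plus f g : simple_fun f -> simple_fun g -> simple_fun (fun z => f z + g z).
Proof.
  intros [Vf [NF [CF MF]]] [Vg [NG [CG MG]]].
  exists (nodup Req_EM_T (map (fun p => fst p + snd p) (list_prod Vf Vg))).
  split; [apply NoDup_nodup|split].
  - intros z Hz. apply nodup_In. apply in_map_iff. exists (f z, g z). split; auto.
    apply in_prod; auto.
  - intros u.
    replace (fun z => 0 <= z /\ f z + g z = u) with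
      (fun z => exists v, In v Vf /\ ((0 <= z /\ f z = v) /\ (0 <= z /\ g z = u - v))).
    + apply measurable_union_list. intros v _. apply measurable_inter; auto.
    + apply pred_ext. intros z. split.
      * intros [v [_ [[h1 h2] [h3 h4]]]]. split; auto. lra.
      * intros [h1 h2]. exists (f z). split; auto. split; auto. split; auto. lra.
Qed.

Lemma simple_fun_scale f c : simple_fun f -> simple_fun (fun z => f z * c).
Proof.
  intros [Vf [NF [CF MF]]].
  exists (nodup Req_EM_T (map (fun v => v * c) Vf)).
  split; [apply NoDup_nodup|split].
  - intros z Hz. apply nodup_In. apply in_map_iff. exists (f z). split; auto.
  - intros u.
    replace (fun z => 0 <= z /\ f z * c = u) with
      (fun z => exists v, In v (filter (fun v => if Req_EM_T (v * c) u then true else false) Vf)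
                          /\ (0 <= z /\ f z = v)).
    + apply measurable_union_list. intros v _. auto.
    + apply pred_ext. intros z. split.
      * intros [v [h1 [h2 h3]]]. apply filter_In in h1. destruct h1 as [_ h1].
        destruct (Req_EM_T (v * c) u); try discriminate. subst. auto.
      * intros [h1 h2]. exists (f z). split; auto. apply filter_In. split; auto.
        destruct (Req_EM_T (f z * c) u); auto.
Qed.

Lemma integral_add D f g I J : simple_fun f -> simple_fun g ->
  (forall z, D z -> 0 <= z) -> finite_outer D ->
  integral_is D f I -> integral_is D g J -> integral_is D (fun z => f z + g z) (I + J).
Proof.
  intros [Vf [NF [CF MF]]] [Vg [NG [CG MG]]] D0 B HI HJ W NW CW.
  rewrite <- (HI Vf NF), <- (HJ Vg NG) by (intros z Dz; auto).
  (* cut D along the joint level sets of g and f, where f + g is constant *)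
  assert (Hc : forall h V, IntL D h V = lsum (fun w => lsum (fun v =>
       IntL (fun z => (D z /\ g z = w) /\ f z = v) h V) Vf) Vg).
  { intros h V. rewrite (IntL_part g Vg h V D NG (fun w _ => MG w)); [|intros z Dz; split; auto|auto].
    apply lsum_ext_in. intros w _.
    rewrite (IntL_part f Vf h V _ NF (fun w _ => MF w)); [auto| intros z [Dz _]; split; auto
      | eapply finite_outer_mono; [|apply B]; simpl; tauto]. }
  rewrite !Hc, <- lsum_plus. apply lsum_ext_in. intros w _.
  rewrite <- lsum_plus. apply lsum_ext_in. intros v _.
  rewrite (IntL_const _ _ _ (v + w) NW); [| intros z [[Dz _] _]; auto | intros z [[Dz e1] e2]; rewrite e1, e2; ring].
  rewrite (IntL_const _ _ _ v NF); [| intros z [[Dz _] _]; auto | intros z [[Dz _] e]; auto].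
  rewrite (IntL_const _ _ _ w NG); [| intros z [[Dz _] _]; auto | intros z [[Dz e] _]; auto].
  ring.
Qed.

Lemma integral_scale D f c I : simple_fun f -> (forall z, D z -> 0 <= z) -> finite_outer D ->
  integral_is D f I -> integral_is D (fun z => f z * c) (I * c).
Proof.
  intros [Vf [NF [CF MF]]] D0 B HI W NW CW.
  rewrite <- (HI Vf NF) by (intros z Dz; auto).
  rewrite (IntL_part f Vf _ _ _ NF (fun w _ => MF w)); [|intros z Dz; split; auto|auto].
  unfold IntL at 2. rewrite Rmult_comm, <- lsum_scal. apply lsum_ext_in. intros v _.
  rewrite (IntL_const _ _ _ (v * c) NW); [ring| intros z [Dz _]; auto | intros z [Dz e]; rewrite e; auto].
Qed.

Lemma integral_fsum n (f : nat -> R -> R) (I : nat -> R) D : (0 < n)%nat ->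
  (forall z, D z -> 0 <= z) -> finite_outer D ->
  (forall q, (q < n)%nat -> simple_fun (f q) /\ integral_is D (f q) (I q)) ->
  simple_fun (fun z => fsum n (fun q => f q z)) /\
  integral_is D (fun z => fsum n (fun q => f q z)) (fsum n I).
Proof.
  intros Hn D0 B Hf.
  assert (H : forall k, (k <= n)%nat -> simple_fun (fun z => fsum k (fun q => f q z)) /\
            integral_is D (fun z => fsum k (fun q => f q z)) (fsum k I)); [|apply H; lia].
  induction k as [|k IH]; intros Hk; simpl.
  - split.
    + (* the zero function is 0 times the simple function f 0 *)
      replace (fun _ : R => 0) with (fun z => f 0%nat z * 0)
        by (apply functional_extensionality; intros; ring).
      apply simple_fun_scale, Hf. lia.
    + intros W NW CW. rewrite (IntL_const D _ W 0 NW CW) by auto. ring.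
  - destruct IH as [HS HI]; [lia|]. destruct (Hf k ltac:(lia)) as [HSk HIk].
    split; [apply simple_fun_plus; auto|apply integral_add; auto].
Qed.

Lemma integral_lower D f C I : simple_fun f -> (forall z, D z -> 0 <= z) -> finite_outer D ->
  (forall z, D z -> - C <= f z) -> integral_is D f I -> - C * mu D <= I.
Proof.
  intros [Vf [NF [CF MF]]] D0 B HC HI.
  rewrite <- (HI Vf NF) by (intros z Dz; auto).
  rewrite (IntL_part f Vf _ _ _ NF (fun w _ => MF w)); [|intros z Dz; split; auto|auto].
  rewrite (mu_part f Vf NF (fun w _ => MF w)); [|intros z Dz; split; auto|auto].
  rewrite <- lsum_scal. apply lsum_le. intros w _.
  rewrite (IntL_const _ _ _ w NF); [| intros z [Dz _]; auto | intros z [Dz e]; auto].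
  destruct (classic (exists z, D z /\ f z = w)) as [[z [Dz e]]|h].
  - assert (0 <= mu (fun z => D z /\ f z = w))
      by (apply mu_ge0; eapply finite_outer_mono; [|apply B]; simpl; tauto).
    specialize (HC z Dz). rewrite e in HC. nra.
  - rewrite mu_empty; [lra|]. intros z Hz. apply h. exists z; auto.
Qed.

Lemma integral_ae_const D f c : simple_fun f -> (forall z, D z -> 0 <= z) -> finite_outer D ->
  null (fun z => D z /\ f z <> c) -> integral_is D f (c * mu D).
Proof.
  intros [Vf [NF [CF MF]]] D0 B Hnull W NW CW.
  rewrite (IntL_indep _ _ W Vf NW NF CW) by (intros z Dz; auto).
  rewrite (mu_part f Vf NF (fun w _ => MF w)); [|intros z Dz; split; auto|auto].
  unfold IntL. rewrite <- lsum_scal. apply lsum_ext_in. intros v _.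
  destruct (Req_EM_T v c) as [->|ne]; [reflexivity|].
  rewrite (mu_null _ _ Hnull); [ring|]. intros z [Dz e]. subst. auto.
Qed.


Lemma dot_ext Q x y z : (forall q, (q < Q)%nat -> x q = y q) -> dot Q x z = dot Q y z.
Proof. intros H. unfold dot. apply fsum_ext. intros i Hi. rewrite H; auto. Qed.

Lemma div_nonneg x y : 0 <= x -> 0 < y -> 0 <= x / y.
Proof. intros Hx Hy. apply Rmult_le_pos; [|left; apply Rinv_0_lt_compat]; auto. Qed.

Lemma dot_div Q x y t : dot Q (fun q => x q / t) y = dot Q x y / t.
Proof. unfold dot, Rdiv. rewrite <- fsum_scalr. apply fsum_ext. intros; ring. Qed.

Lemma dot_sym Q B x y : (forall p q, (p < Q)%nat -> (q < Q)%nat -> B p q = B q p) ->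
  dot Q x (mulmv Q B y) = dot Q y (mulmv Q B x).
Proof.
  intros HB. unfold dot, mulmv.
  rewrite (fsum_ext Q _ (fun p => fsum Q (fun q => x p * B p q * y q)))
    by (intros; rewrite <- fsum_scal; apply fsum_ext; intros; ring).
  rewrite fsum_swap. apply fsum_ext. intros q Hq. rewrite <- fsum_scal. apply fsum_ext. intros p Hp.
  rewrite HB by auto. ring.
Qed.

(* For symmetric positive definite B, the tangent bound
   2 <x, B y> - <y, B y> <= <x, B x>, i.e. <x - y, B (x - y)> >= 0. *)
Lemma quad_tangent_bound Q B x y : (forall p q, (p < Q)%nat -> (q < Q)%nat -> B p q = B q p) ->
  (forall v : nat -> R, (exists q, (q < Q)%nat /\ v q <> 0) -> 0 < dot Q v (mulmv Q B v)) ->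
  2 * dot Q x (mulmv Q B y) - dot Q y (mulmv Q B y) <= dot Q x (mulmv Q B x).
Proof.
  intros Hsym Hpd. set (v := fun q => x q - y q).
  assert (Hv : 0 <= dot Q v (mulmv Q B v)).
  { destruct (classic (exists q, (q < Q)%nat /\ v q <> 0)) as [h|h]; [left; auto|].
    right. symmetry. apply fsum_zero. intros i Hi.
    replace (v i) with 0; [ring|]. apply NNPP. intro. apply h. exists i; auto. }
  assert (Hexp : dot Q v (mulmv Q B v) =
    dot Q x (mulmv Q B x) - 2 * dot Q x (mulmv Q B y) + dot Q y (mulmv Q B y)).
  { assert (Hm : mulmv Q B v = fun p => mulmv Q B x p - mulmv Q B y p).
    { apply functional_extensionality. intros p. unfold mulmv, v.
      rewrite <- fsum_minus. apply fsum_ext. intros; ring. }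
    rewrite Hm. transitivity (dot Q x (mulmv Q B x) - dot Q x (mulmv Q B y)
                            - (dot Q y (mulmv Q B x) - dot Q y (mulmv Q B y))).
    - unfold dot, v. rewrite <- !fsum_minus. apply fsum_ext. intros; ring.
    - rewrite (dot_sym Q B y x Hsym). ring. }
  lra.
Qed.


Lemma cv_const (a : R) : Un_cv (fun _ => a) a.
Proof. intros eps H. exists O. intros. unfold Rdist. rewrite Rminus_diag, Rabs_R0. auto. Qed.

Lemma cv_fsum n (u : nat -> nat -> R) l : (forall i, (i < n)%nat -> Un_cv (u i) (l i)) ->
  Un_cv (fun c => fsum n (fun i => u i c)) (fsum n l).
Proof.
  induction n; intros H; simpl; [apply cv_const|].
  apply CV_plus; [apply IHn; intros; apply H|apply H]; lia.
Qed.

Lemma cv_dot Q (x : nat -> nat -> R) l y : (forall q, (q < Q)%nat -> Un_cv (fun d => x d q) (l q)) ->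
  Un_cv (fun d => dot Q (x d) y) (dot Q l y).
Proof.
  intros H. apply (cv_fsum Q (fun i d => x d i * y i)). intros i Hi.
  apply CV_mult; auto. apply cv_const.
Qed.

Lemma cv_quad Q B (x : nat -> nat -> R) l : (forall q, (q < Q)%nat -> Un_cv (fun d => x d q) (l q)) ->
  Un_cv (fun d => dot Q (x d) (mulmv Q B (x d))) (dot Q l (mulmv Q B l)).
Proof.
  intros H. apply (cv_fsum Q (fun i d => x d i * mulmv Q B (x d) i)). intros i Hi.
  apply CV_mult; auto. apply (cv_fsum Q (fun j d => B i j * x d j)). intros j Hj.
  apply CV_mult; [apply cv_const|auto].
Qed.

Lemma cv_ext_ev u v l c0 : (forall c, (c0 <= c)%nat -> u c = v c) -> Un_cv u l -> Un_cv v l.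
Proof.
  intros He H eps Heps. destruct (H eps Heps) as [N HN]. exists (max N c0). intros n Hn.
  rewrite <- He by lia. apply HN; lia.
Qed.

Lemma cv_nonneg u l : (forall n, 0 <= u n) -> Un_cv u l -> 0 <= l.
Proof.
  intros H Hc. destruct (Rle_lt_dec 0 l); auto.
  destruct (Hc (- l) ltac:(lra)) as [N HN]. specialize (HN N (le_n _)). specialize (H N).
  unfold Rdist in HN. rewrite Rabs_right in HN; lra.
Qed.

Definition incr (phi : nat -> nat) := forall d, (phi d < phi (S d))%nat.

Lemma incr_comp phi psi : incr phi -> incr psi -> incr (fun d => phi (psi d)).
Proof.
  intros Hphi Hpsi d.
  assert (H : forall a b, (a < b)%nat -> (phi a < phi b)%nat).
  { intros a b Hab. induction Hab; [apply Hphi|specialize (Hphi m); lia]. }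
  apply H, Hpsi.
Qed.

Lemma incr_ge phi : incr phi -> forall d, (d <= phi d)%nat.
Proof. intros H d. induction d; [lia|]. specialize (H d). lia. Qed.

Lemma cv_sub u l phi : incr phi -> Un_cv u l -> Un_cv (fun d => u (phi d)) l.
Proof.
  intros Hp H eps He. destruct (H eps He) as [N HN]. exists N. intros n Hn.
  apply HN. pose proof (incr_ge phi Hp n). lia.
Qed.

Lemma bolzano_weierstrass (u : nat -> R) M : (forall n, Rabs (u n) <= M) ->
  exists phi l, incr phi /\ Un_cv (fun d => u (phi d)) l.
Proof.
  intros HM.
  destruct (Bolzano_Weierstrass u (fun c => -M <= c <= M) (compact_P3 (-M) M)) as [l Hl].
  { intros n. specialize (HM n). revert HM. unfold Rabs. destruct Rcase_abs; lra. }
  (* every neighbourhood of l is visited beyond any index: pick visits to the 1/(k+1) balls *)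
  assert (Hx : forall N k : nat, exists p, (N <= p)%nat /\ Rabs (u p - l) < / (INR k + 1)).
  { intros N k.
    assert (Hk : 0 < / (INR k + 1)) by (apply Rinv_0_lt_compat; pose proof (pos_INR k); lra).
    destruct (Hl (fun x => Rabs (x - l) < / (INR k + 1)) N) as [p [Hp1 Hp2]].
    - exists (mkposreal _ Hk). intros y Hy. unfold disc in Hy. simpl in Hy. auto.
    - exists p; auto. }
  set (g := fun N k => proj1_sig (constructive_indefinite_description _ (Hx N k))).
  assert (Hg : forall N k, (N <= g N k)%nat /\ Rabs (u (g N k) - l) < / (INR k + 1)).
  { intros N k. unfold g. destruct (constructive_indefinite_description _ (Hx N k)). auto. }
  set (phi := fix phi d := match d with O => g O O | S d' => g (S (phi d')) (S d') end).
  exists phi, l. split.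
  - intros d. simpl. destruct (Hg (S (phi d)) (S d)). lia.
  - intros eps He.
    destruct (archimed (/ eps)) as [h1 _].
    assert (0 <= IZR (up (/ eps))) by (pose proof (Rinv_0_lt_compat eps He); lra).
    exists (Z.to_nat (up (/ eps))). intros n Hn. unfold Rdist.
    assert (Hp : Rabs (u (phi n) - l) < / (INR n + 1)) by (destruct n; simpl; apply Hg).
    assert (Hle : INR (Z.to_nat (up (/ eps))) <= INR n) by (apply le_INR; auto).
    rewrite INR_IZR_INZ, Z2Nat.id in Hle by (apply le_IZR; auto).
    apply Rlt_le_trans with (1 := Hp).
    rewrite <- (Rinv_inv eps). apply Rinv_le_contravar; [apply Rinv_0_lt_compat; auto|lra].
Qed.

(* Bolzano-Weierstrass in R^Q, by extracting successively in each coordinate. *)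
Lemma bolzano_weierstrass_vec (u : nat -> nat -> R) Q (M : nat -> R) :
  (forall c q, (q < Q)%nat -> Rabs (u c q) <= M q) ->
  exists phi psi, incr phi /\ forall q, (q < Q)%nat -> Un_cv (fun d => u (phi d) q) (psi q).
Proof.
  intros HM.
  assert (H : forall k, (k <= Q)%nat -> exists phi psi, incr phi /\
            forall q, (q < k)%nat -> Un_cv (fun d => u (phi d) q) (psi q)); [|apply H; lia].
  induction k; intros Hk.
  - exists (fun d => d), (fun _ => 0). split; [intros d; lia|intros; lia].
  - destruct IHk as [phi [psi [Hp Hc]]]; [lia|].
    destruct (bolzano_weierstrass (fun d => u (phi d) k) (M k)) as [phi' [l [Hp' Hc']]];
      [intros; apply HM; lia|].
    exists (fun d => phi (phi' d)), (fun q => if Nat.eqb q k then l else psi q).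
    split; [apply incr_comp; auto|].
    intros q Hq. destruct (Nat.eqb_spec q k); [subst; auto|].
    apply (cv_sub (fun d => u (phi d) q)); auto. apply Hc. lia.
Qed.

Definition tends_to_infinity (s : nat -> R) : Prop :=
  forall M, exists c0, forall c, (c0 <= c)%nat -> M <= s c.

Lemma lim_infty_seq f l s : lim_infty f l -> tends_to_infinity s -> Un_cv (fun c => f (s c)) l.
Proof.
  intros Hf Hs eps He. destruct (Hf eps He) as [T HT]. destruct (Hs T) as [c0 Hc0].
  exists c0. intros n Hn. unfold Rdist. apply HT, Hc0. lia.
Qed.

Lemma tends_to_infinity_sub s phi : incr phi -> tends_to_infinity s ->
  tends_to_infinity (fun d => s (phi d)).
Proof.
  intros Hphi Hs M. destruct (Hs M) as [c0 Hc0]. exists c0. intros d Hd.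
  apply Hc0. pose proof (incr_ge phi Hphi d). lia.
Qed.

Lemma tends_to_infinity_le s t : (forall c, s c <= t c) -> tends_to_infinity s -> tends_to_infinity t.
Proof.
  intros Hst Hs M. destruct (Hs M) as [c0 Hc0]. exists c0. intros c Hc.
  specialize (Hc0 c Hc). specialize (Hst c). lra.
Qed.

Lemma increasing_unbounded t : (forall c, t c < t (S c)) -> (forall M, exists c, M < t c) ->
  tends_to_infinity t.
Proof.
  intros Hinc Hunb M. destruct (Hunb M) as [c0 Hc0]. exists c0. intros c Hc.
  induction Hc; [lra|]. specialize (Hinc m). lra.
Qed.

Lemma tends_to_infinity_ratio s t r : tends_to_infinity t -> (forall c, 0 < t c) ->
  Un_cv (fun c => s c / t c) r -> 0 < r -> tends_to_infinity s.
Proof.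
  intros Ht Hpos Hr Hr0 M. destruct (Hr (r / 2) ltac:(lra)) as [c1 Hc1].
  destruct (Ht (2 * Rabs M / r)) as [c2 Hc2]. exists (max c1 c2). intros c Hc.
  specialize (Hc1 c ltac:(lia)). specialize (Hc2 c ltac:(lia)). specialize (Hpos c).
  unfold Rdist in Hc1. apply Rabs_def2 in Hc1.
  assert (Hs : s c = s c / t c * t c) by (field; lra).
  assert (HM : r / 2 * (2 * Rabs M / r) = Rabs M) by (field; lra).
  assert (0 <= 2 * Rabs M / r) by (apply div_nonneg; [pose proof (Rabs_pos M)|]; lra).
  assert (r / 2 * (2 * Rabs M / r) <= s c / t c * t c) by (apply Rmult_le_compat; lra).
  pose proof (Rle_abs M). lra.
Qed.

Lemma rescaled_dot_limit Q (Y : nat -> nat -> R) (s t : nat -> R) phi psi b r L :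
  incr phi -> tends_to_infinity s -> (forall c, 0 < t c) ->
  Un_cv (fun c => dot Q (Y c) b / t c) L -> Un_cv (fun c => s c / t c) r ->
  (forall q, (q < Q)%nat -> Un_cv (fun d => Y (phi d) q / s (phi d)) (psi q)) ->
  dot Q psi b * r = L.
Proof.
  intros Hphi Hs Ht HL Hr Hpsi.
  apply (UL_sequence (fun d => dot Q (fun q => Y (phi d) q / s (phi d)) b * (s (phi d) / t (phi d)))).
  - apply CV_mult; [apply cv_dot; auto|apply (cv_sub (fun c => s c / t c)); auto].
  - destruct (tends_to_infinity_sub s phi Hphi Hs 1) as [d1 Hd1].
    apply cv_ext_ev with (c0 := d1) (u := fun d => dot Q (Y (phi d)) b / t (phi d)).
    + intros d Hd. specialize (Hd1 d Hd). specialize (Ht (phi d)).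
      rewrite dot_div. field. split; apply Rgt_not_eq; lra.
    + apply (cv_sub (fun c => dot Q (Y c) b / t c)); auto.
Qed.

Lemma limsup_of_sequence (g : R -> R) (s : nat -> R) l a :
  tends_to_infinity s -> Un_cv (fun d => g (s d)) l -> a < l -> limsup_infty_gt g a.
Proof.
  intros Hs Hg Hl. exists ((a + l) / 2). split; [lra|]. intros T.
  destruct (Hg ((l - a) / 2) ltac:(lra)) as [d1 Hd1]. destruct (Hs T) as [d2 Hd2].
  exists (s (max d1 d2)). split; [apply Hd2; lia|].
  specialize (Hd1 (max d1 d2) ltac:(lia)). unfold Rdist in Hd1.
  revert Hd1. unfold Rabs. destruct Rcase_abs; intros; lra.
Qed.


(* Maximum of a list of reals (0 for the empty list). *)
Definition maxl (l : list R) : R := match l with nil => 0 | x :: l' => fold_right Rmax x l' end.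

Lemma maxl_ge x l : In x l -> x <= maxl l.
Proof.
  destruct l as [|a l]; simpl; [tauto|].
  induction l as [|y l IH]; simpl; intros H.
  - destruct H as [e|[]]; subst; lra.
  - destruct H as [e|[e|H]].
    + eapply Rle_trans; [apply IH; left; auto|apply Rmax_r].
    + subst; apply Rmax_l.
    + eapply Rle_trans; [apply IH; right; auto|apply Rmax_r].
Qed.

Lemma maxl_in l : l <> nil -> In (maxl l) l.
Proof.
  destruct l as [|a l]; simpl; [tauto|]. intros _.
  induction l; simpl; [auto|].
  destruct (Rle_dec a0 (fold_right Rmax a l)).
  - rewrite (Rmax_right _ _ r). destruct IHl as [h|h]; [left; auto| right; right; auto].
  - rewrite Rmax_left by lra. right; left; auto.
Qed.

Section StabilityRegion.
Variables (Q E : nat) (Sset : nat -> list (nat -> R)) (pi rho b : nat -> R).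

Definition greedy_value (k : nat) : R := maxl (map (fun S => dot Q S b) (Sset k)).

Definition cut_negative (S : nat -> R) : nat -> R :=
  fun q => if Rlt_dec (b q) 0 then Rmin (S q) 0 else S q.

Lemma complete_cut L S : complete Q L -> In S L -> inS Q L (cut_negative S).
Proof.
  intros HC HS.
  assert (H : forall j, (j <= Q)%nat -> exists w, In w L /\
            (forall q, (q < j)%nat -> w q = cut_negative S q) /\
            (forall q, (j <= q < Q)%nat -> w q = S q)).
  { induction j; intros Hj.
    - exists S. split; auto. split; intros; auto; lia.
    - destruct IHj as [w [Hw [H1 H2]]]; [lia|].
      assert (Hwj : w j = S j) by (apply H2; lia).
      destruct (Rlt_dec (b j) 0) as [hb|hb]; [destruct (Rlt_dec 0 (w j)) as [hw|hw]|].
      + destruct (HC w Hw j ltac:(lia) hw) as [w' [Hw' Hw'2]].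
        exists w'. split; auto. split; intros q Hq; rewrite <- Hw'2 by lia;
          destruct (Nat.eqb_spec q j); try lia.
        * subst. unfold cut_negative. destruct (Rlt_dec (b j) 0); [|tauto]. rewrite Rmin_right; lra.
        * apply H1; lia.
        * apply H2; lia.
      + exists w. split; auto. split; [|intros; apply H2; lia].
        intros q Hq. destruct (Nat.eqb_spec q j); [|apply H1; lia].
        subst. unfold cut_negative. destruct (Rlt_dec (b j) 0); [|tauto]. rewrite Rmin_left; lra.
      + exists w. split; auto. split; [|intros; apply H2; lia].
        intros q Hq. destruct (Nat.eqb_spec q j); [|apply H1; lia].
        subst. unfold cut_negative. destruct (Rlt_dec (b j) 0); [tauto|]. auto. }
  destruct (H Q (le_n _)) as [w [Hw [H1 _]]]. exists w. split; auto. intros; symmetry; auto.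
Qed.

Lemma cut_le_greedy k S : complete Q (Sset k) -> In S (Sset k) ->
  dot Q (cut_negative S) b <= greedy_value k.
Proof.
  intros HC HS. destruct (complete_cut (Sset k) S HC HS) as [w [Hw Hw2]].
  rewrite (dot_ext Q _ w b Hw2). apply maxl_ge. apply (in_map (fun S => dot Q S b)); auto.
Qed.

(* Coordinates with
   b_q >= 0 are bounded using rho <= sum pi phi S; coordinates with b_q < 0 use
   rho_q >= 0 >= the cut service vectors. *)
Lemma region_greedy_bound : (forall k, (k < E)%nat -> complete Q (Sset k)) ->
  (forall k, (k < E)%nat -> 0 < pi k) -> in_region Q E Sset pi rho ->
  dot Q rho b <= fsum E (fun k => pi k * greedy_value k).
Proof.
  intros HC Hpi [Hr [phi [Hp1 [Hp2 Hp3]]]].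
  set (Sk := fun k i => nth i (Sset k) (fun _ => 0)).
  set (mix := fun h : (nat -> R) -> R => fsum E (fun k => pi k *
                fsum (length (Sset k)) (fun i => phi k i * h (cut_negative (Sk k i))))).
  apply Rle_trans with (fsum Q (fun q => mix (fun S => S q) * b q)).
  { apply fsum_le. intros q Hq. unfold mix. destruct (Rlt_dec (b q) 0) as [hb|hb].
    - assert (Hmix : fsum E (fun k => pi k * fsum (length (Sset k))
                       (fun i => phi k i * cut_negative (Sk k i) q)) <= 0).
      { apply fsum_nonpos. intros k Hk.
        assert (fsum (length (Sset k)) (fun i => phi k i * cut_negative (Sk k i) q) <= 0).
        { apply fsum_nonpos. intros i Hi.
          unfold cut_negative. destruct (Rlt_dec (b q) 0); [|tauto].
          assert (Rmin (Sk k i q) 0 <= 0) by apply Rmin_r.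
          specialize (Hp1 k i Hk Hi). nra. }
        specialize (Hpi k Hk). nra. }
      specialize (Hr q Hq). nra.
    - apply Rmult_le_compat_r; [lra|].
      eapply Rle_trans; [apply Hp3; auto|]. right. apply fsum_ext. intros k Hk. f_equal.
      apply fsum_ext. intros i Hi. f_equal. unfold cut_negative. destruct (Rlt_dec (b q) 0); tauto. }
  apply Rle_trans with (mix (fun S => dot Q S b)).
  { right. unfold mix, dot.
    rewrite (fsum_ext Q _ (fun q => fsum E (fun k => fsum (length (Sset k))
       (fun i => pi k * phi k i * (cut_negative (Sk k i) q * b q)))))
      by (intros q Hq; rewrite <- fsum_scalr; apply fsum_ext; intros k Hk;
          rewrite Rmult_assoc, <- fsum_scalr, <- fsum_scal; apply fsum_ext; intros i Hi; ring).
    rewrite fsum_swap. apply fsum_ext. intros k Hk. rewrite fsum_swap, <- fsum_scal.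
    apply fsum_ext. intros i Hi. rewrite <- fsum_scal, <- fsum_scal. apply fsum_ext. intros; ring. }
  apply fsum_le. intros k Hk. apply Rmult_le_compat_l; [left; auto|].
  apply Rle_trans with (fsum (length (Sset k)) (fun i => phi k i * greedy_value k)).
  - apply fsum_le. intros i Hi. apply Rmult_le_compat_l; [apply Hp1; auto|].
    apply cut_le_greedy; auto. apply nth_In; auto.
  - rewrite fsum_scalr, Hp2; auto. lra.
Qed.

End StabilityRegion.


Section QueueingModel.
Variables (Q E : nat) (Sset : nat -> list (nat -> R)) (env : R -> nat)
  (N X sched : R -> nat -> R) (b : nat -> R).
Hypothesis HQ : (1 <= Q)%nat.
Hypothesis HSne : forall k, (k < E)%nat -> Sset k <> nil.
Hypothesis Henv_range : forall t, 0 <= t -> (env t < E)%nat.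
Hypothesis Henv_meas : forall k, measurable (fun z => 0 <= z /\ env z = k).
Hypothesis Hsched_in : forall t, 0 <= t -> inS Q (Sset (env t)) (sched t).
Hypothesis Hsched_meas : forall q c, (q < Q)%nat -> measurable (fun z => 0 <= z /\ sched z q = c).
Hypothesis HX : forall t q, 0 <= t -> (q < Q)%nat ->
  simple_integral (fun z => sched z q) 0 t (X 0 q + N t q - X t q).
Hypothesis HX_nonneg : forall t q, 0 <= t -> (q < Q)%nat -> 0 <= X t q.

Definition service_values : list R :=
  flat_map (fun e => flat_map (fun S => map S (seq 0 Q)) (Sset e)) (seq 0 E).

Lemma sched_value_in z q : 0 <= z -> (q < Q)%nat -> In (sched z q) service_values.
Proof.
  intros Hz Hq. destruct (Hsched_in z Hz) as [w [Hw Hw2]]. rewrite Hw2 by auto.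
  apply in_flat_map. exists (env z). split; [apply in_seq; specialize (Henv_range z Hz); lia|].
  apply in_flat_map. exists w. split; auto. apply in_map, in_seq. lia.
Qed.

Lemma sched_simple q : (q < Q)%nat -> simple_fun (fun z => sched z q).
Proof.
  intros Hq. exists (nodup Req_EM_T service_values). split; [apply NoDup_nodup|split].
  - intros z Hz. apply nodup_In, sched_value_in; auto.
  - intros v. apply Hsched_meas; auto.
Qed.

(* The intervals (0, s] are measurable: they are domains of the simple integrals in HX. *)
Lemma interval_measurable s : 0 <= s -> measurable (fun z => 0 < z <= s).
Proof. intros Hs. exact (proj2 (simple_integral_is _ _ _ _ (HX s 0%nat Hs ltac:(lia)))). Qed.

Lemma sched_increment s t q : 0 <= s <= t -> (q < Q)%nat ->
  integral_is (fun z => s < z <= t) (fun z => sched z q) ((N t q - X t q) - (N s q - X s q)).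
Proof.
  intros Hst Hq.
  pose proof (proj1 (simple_integral_is _ _ _ _ (HX t q ltac:(lra) Hq))) as Ht.
  pose proof (proj1 (simple_integral_is _ _ _ _ (HX s q ltac:(lra) Hq))) as Hs.
  replace (fun z => 0 < z <= s) with (fun z => (0 < z <= t) /\ (0 < z <= s)) in Hs
    by (apply pred_ext; intros; lra).
  replace (fun z => s < z <= t) with (fun z => (0 < z <= t) /\ ~ (0 < z <= s)).
  - replace ((N t q - X t q) - (N s q - X s q))
      with ((X 0 q + N t q - X t q) - (X 0 q + N s q - X s q)) by ring.
    apply integral_split; auto.
    + apply sched_simple; auto.
    + intros; lra.
    + apply interval_measurable; lra.
    + apply finite_outer_interval with 0 t. intros; lra.
  - apply pred_ext. intros z. split; [intros [h1 h2]; split; [|lra]; apply Rnot_le_lt; intro; lra|].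
    intros h. split; [lra|]. lra.
Qed.

Definition occupation (e : nat) (s t : R) : R := mu (fun z => (s < z <= t) /\ env z = e).

Lemma occupation_additive e s t : 0 <= s <= t ->
  occupation e 0 t = occupation e 0 s + occupation e s t.
Proof.
  intros Hst. unfold occupation.
  rewrite (mu_split (fun z => 0 < z <= s) (fun z => (0 < z <= t) /\ env z = e));
    [|apply interval_measurable; lra|apply finite_outer_interval with 0 t; intros; lra].
  f_equal; f_equal; apply pred_ext; intros z; split.
  - intros [[h1 h2] h3]; split; [lra|auto].
  - intros [h1 h2]; split; [split; [lra|auto]|lra].
  - intros [[h1 h2] h3]; split; [|auto]. split; [|lra]. apply Rnot_le_lt. intro. apply h3. lra.
  - intros [h1 h2]; split; [split; [lra|auto]|lra].
Qed.

(* The occupation measure of [0, r] from Defs equals that of (0, r]: they differ by a point. *)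
Lemma occupation_from_zero e r m : 0 < r ->
  has_measure (fun z => 0 <= z <= r /\ env z = e) m -> occupation e 0 r = m.
Proof.
  intros Hr [_ Hm]. rewrite <- (mu_eq _ _ Hm), (mu_split (fun z => 0 < z <= r));
    [|apply interval_measurable; lra|apply finite_outer_interval with 0 r; intros; lra].
  rewrite (mu_null (fun z => z = 0) (fun z => (0 <= z <= r /\ env z = e) /\ ~ (0 < z <= r)));
    [|apply (null_point _ 0); auto|intros z [[h1 _] h3]; apply Rle_antisym; [apply Rnot_lt_le|]; lra].
  rewrite Rplus_0_r. unfold occupation. f_equal. apply pred_ext. intros z. split.
  - intros [h1 h2]. split; [split; [lra|]|]; tauto.
  - intros [[h1 h2] h3]. split; auto.
Qed.

(* Over an interval where the schedule is greedy for b, integrating <S, b> by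
   environment state gives <increment of N - X, b> = sum_e M_e * occupation. *)
Lemma greedy_increment s t : 0 <= s <= t ->
  null (fun z => s < z <= t /\ ~ (forall S', In S' (Sset (env z)) -> dot Q S' b <= dot Q (sched z) b)) ->
  fsum Q (fun q => ((N t q - X t q) - (N s q - X s q)) * b q) =
  fsum E (fun e => greedy_value Q Sset b e * occupation e s t).
Proof.
  intros Hst Hgreedy.
  set (D := fun z => s < z <= t).
  assert (D0 : forall z, D z -> 0 <= z) by (unfold D; intros; lra).
  assert (BD : finite_outer D) by (apply finite_outer_interval with s t; unfold D; intros; lra).
  destruct (integral_fsum Q (fun q z => sched z q * b q)
              (fun q => ((N t q - X t q) - (N s q - X s q)) * b q) D ltac:(lia) D0 BD)
    as [Hsimple Hint].
  { intros q Hq. split; [apply simple_fun_scale, sched_simple; auto|].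
    apply integral_scale; auto; [apply sched_simple; auto|apply sched_increment; auto]. }
  apply (integral_unique D _ _ _ Hsimple D0 Hint). rewrite <- lsum_seq.
  apply (integral_partition env); [apply seq_NoDup|intros; apply Henv_meas| |auto|].
  { intros z Dz. split; auto. apply in_seq. specialize (Henv_range z (D0 z Dz)). lia. }
  intros e He. apply in_seq in He. apply integral_ae_const; auto.
  - intros z [Dz _]; auto.
  - eapply finite_outer_mono; [|apply BD]. simpl; tauto.
  - (* off the null set, <S(z), b> is the maximum M_e *)
    revert Hgreedy. apply outer_mono.
    intros z [[Dz Hez] Hne]. split; [exact Dz|]. intro Hmax. apply Hne.
    assert (Hval : map (fun S => dot Q S b) (Sset e) <> nil).
    { intro h0. apply map_eq_nil in h0. apply (HSne e ltac:(lia) h0). }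
    apply Rle_antisym.
    + destruct (Hsched_in z (D0 z Dz)) as [w [Hw Hw2]].
      change (dot Q (sched z) b <= greedy_value Q Sset b e).
      rewrite (dot_ext Q _ w b Hw2), <- Hez. apply maxl_ge, (in_map (fun S => dot Q S b)); auto.
    + destruct (proj1 (in_map_iff _ _ _) (maxl_in _ Hval)) as [Sx [eS HS]].
      unfold greedy_value. rewrite <- eS. change (dot Q Sx b <= dot Q (sched z) b).
      apply Hmax. rewrite Hez. auto.
Qed.

(* The schedule is bounded, so the workload grows at most linearly. *)
Lemma workload_linear_bound s q : 0 <= s -> (q < Q)%nat ->
  X s q <= X 0 q + N s q + lsum Rabs service_values * s.
Proof.
  intros Hs Hq.
  pose proof (proj1 (simple_integral_is _ _ _ _ (HX s q Hs Hq))) as HI.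
  assert (Hlow : - lsum Rabs service_values * mu (fun z => 0 < z <= s) <= X 0 q + N s q - X s q).
  { apply (integral_lower _ (fun z => sched z q)); auto.
    - apply sched_simple; auto.
    - intros; lra.
    - apply finite_outer_interval with 0 s; intros; lra.
    - intros z Hz. pose proof (lsum_abs_ge _ _ (sched_value_in z q ltac:(lra) Hq)).
      revert H. unfold Rabs at 1; destruct Rcase_abs; intros; lra. }
  assert (Hmu : mu (fun z => 0 < z <= s) <= s - 0)
    by (apply mu_le_outer, interval_outer; [lra|intros; lra]).
  pose proof (lsum_abs_nonneg service_values).
  assert (0 <= mu (fun z => 0 < z <= s)) by (apply mu_ge0, finite_outer_interval with 0 s; intros; lra).
  nra.
Qed.

(* X(s_c)/s_c is bounded (linear growth of X, and N(t)/t converges), so by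
   Bolzano-Weierstrass it has a convergent subsequence, with nonnegative limit. *)
Lemma scaled_workload_subsequence (sc rho : nat -> R) : tends_to_infinity sc ->
  (forall q, (q < Q)%nat -> lim_infty (fun t => N t q / t) (rho q)) ->
  exists phi psi, incr phi /\ (forall q, (q < Q)%nat -> 0 <= psi q) /\
    forall q, (q < Q)%nat -> Un_cv (fun d => X (sc (phi d)) q / sc (phi d)) (psi q).
Proof.
  intros Hsc_inf Hrho. destruct (Hsc_inf 1) as [c0 Hc0].
  set (s := fun c => sc (c + c0)%nat).
  assert (Hs1 : forall c, 1 <= s c) by (intros c; apply Hc0; lia).
  assert (Hsi : tends_to_infinity s)
    by (apply (tends_to_infinity_sub sc (fun c => c + c0)%nat); auto; intros d; lia).
  set (MN := fun q => epsilon (inhabits 0) (fun M => forall c, Rabs (N (s c) q / s c) <= M)).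
  assert (HMN : forall q, (q < Q)%nat -> forall c, Rabs (N (s c) q / s c) <= MN q).
  { intros q Hq. unfold MN. apply epsilon_spec.
    destruct (maj_by_pos (fun c => N (s c) q / s c)) as [M [_ HM]]; [|exists M; auto].
    exists (rho q). apply (lim_infty_seq (fun t => N t q / t)); auto. }
  assert (Hu0 : forall c q, (q < Q)%nat -> 0 <= X (s c) q / s c)
    by (intros c q Hq; specialize (Hs1 c); apply div_nonneg; [apply HX_nonneg|]; auto; lra).
  set (C := lsum Rabs service_values).
  destruct (bolzano_weierstrass_vec (fun c q => X (s c) q / s c) Q (fun q => X 0 q + MN q + C))
    as [phi' [psi [Hphi' Hpsi]]].
  - intros c q Hq. specialize (Hs1 c). specialize (HMN q Hq c).
    assert (H0 : 0 <= X 0 q) by (apply HX_nonneg; auto; lra).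
    rewrite Rabs_right by (apply Rle_ge, Hu0; auto).
    pose proof (workload_linear_bound (s c) q ltac:(lra) Hq) as Hlin. fold C in Hlin.
    apply Rle_trans with (X 0 q / s c + N (s c) q / s c + C).
    + apply Rmult_le_reg_r with (s c); [lra|]. unfold Rdiv.
      replace ((X 0 q * / s c + N (s c) q * / s c + C) * s c) with (X 0 q + N (s c) q + C * s c)
        by (field; lra).
      replace (X (s c) q * / s c * s c) with (X (s c) q) by (field; lra). exact Hlin.
    + assert (X 0 q / s c <= X 0 q).
      { unfold Rdiv. rewrite <- (Rmult_1_r (X 0 q)) at 2. apply Rmult_le_compat_l; auto.
        rewrite <- Rinv_1. apply Rinv_le_contravar; lra. }
      pose proof (Rle_abs (N (s c) q / s c)). lra.
  - exists (fun d => (phi' d + c0)%nat), psi. split; [intros d; specialize (Hphi' d); lia|].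
    split; [|exact Hpsi].
    intros q Hq. apply (cv_nonneg _ _ (fun d => Hu0 (phi' d) q Hq) (Hpsi q Hq)).
Qed.
Section Limits.
Variables (tc sc : nat -> R) (eps : R).
Hypothesis Hs : forall c, 0 <= sc c < tc c.
Hypothesis Hsc_inf : tends_to_infinity sc.
Hypothesis Hratio : Un_cv (fun c => sc c / tc c) (1 - eps).

Lemma tc_inf : tends_to_infinity tc.
Proof. apply (tends_to_infinity_le sc); auto. intros c; destruct (Hs c); lra. Qed.

Lemma occupation_limit e (pie : R) (occ : R -> R) :
  (forall t, 0 < t -> has_measure (fun z => 0 <= z <= t /\ env z = e) (occ t)) ->
  lim_infty (fun t => occ t / t) pie ->
  Un_cv (fun c => occupation e (sc c) (tc c) / tc c) (eps * pie).
Proof.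
  intros Hocc Hlim. destruct (Hsc_inf 1) as [c1 Hc1].
  replace (eps * pie) with (pie - pie * (1 - eps)) by ring.
  apply cv_ext_ev with (c0 := c1) (u := fun c => occ (tc c) / tc c - occ (sc c) / sc c * (sc c / tc c)).
  - intros c Hc. specialize (Hc1 c Hc). destruct (Hs c) as [_ Hst].
    pose proof (occupation_additive e (sc c) (tc c) ltac:(lra)) as Hadd.
    rewrite (occupation_from_zero e (tc c) _ ltac:(lra) (Hocc (tc c) ltac:(lra))),
            (occupation_from_zero e (sc c) _ ltac:(lra) (Hocc (sc c) ltac:(lra))) in Hadd.
    replace (occupation e (sc c) (tc c)) with (occ (tc c) - occ (sc c)) by lra.
    field. split; apply Rgt_not_eq; lra.
  - apply CV_minus; [|apply CV_mult; auto]; apply (lim_infty_seq (fun t => occ t / t)); auto.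
    apply tc_inf.
Qed.

(* The key limit: <X(s_c), b> / t_c --> <eta, b> - eps <rho, b> + eps sum_e pi^e M_e,
   obtained by dividing the greedy increment identity by t_c. *)
Lemma weighted_workload_limit (eta rho pi : nat -> R) :
  (forall q, (q < Q)%nat -> Un_cv (fun c => X (tc c) q / tc c) (eta q)) ->
  (forall q, (q < Q)%nat -> lim_infty (fun t => N t q / t) (rho q)) ->
  (forall k, (k < E)%nat -> exists occ : R -> R,
      (forall t, 0 < t -> has_measure (fun z => 0 <= z <= t /\ env z = k) (occ t)) /\
      lim_infty (fun t => occ t / t) (pi k)) ->
  (forall c, null (fun z => sc c < z <= tc c /\
      ~ (forall S', In S' (Sset (env z)) -> dot Q S' b <= dot Q (sched z) b))) ->
  Un_cv (fun c => dot Q (X (sc c)) b / tc c)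
    (dot Q eta b - eps * dot Q rho b + eps * fsum E (fun k => pi k * greedy_value Q Sset b k)).
Proof.
  intros Heta Hrho Hpi Hgreedy. destruct (Hsc_inf 1) as [c1 Hc1].
  set (M := greedy_value Q Sset b).
  apply cv_ext_ev with (c0 := c1) (u := fun c =>
      dot Q (fun q => X (tc c) q / tc c) b - dot Q (fun q => N (tc c) q / tc c) b
    + dot Q (fun q => N (sc c) q / sc c) b * (sc c / tc c)
    + fsum E (fun e => M e * (occupation e (sc c) (tc c) / tc c))).
  - intros c Hc. specialize (Hc1 c Hc). destruct (Hs c) as [_ Hst].
    pose proof (greedy_increment (sc c) (tc c) ltac:(lra) (Hgreedy c)) as Hid.
    assert (Hexp : forall s t, fsum Q (fun q => ((N t q - X t q) - (N s q - X s q)) * b q) =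
              dot Q (N t) b - dot Q (X t) b - dot Q (N s) b + dot Q (X s) b).
    { intros s t. unfold dot. rewrite <- !fsum_minus, <- fsum_plus. apply fsum_ext. intros; ring. }
    rewrite Hexp in Hid. rewrite !dot_div.
    rewrite (fsum_ext E _ (fun e => M e * occupation e (sc c) (tc c) * / tc c)) by (intros; unfold Rdiv; ring).
    rewrite fsum_scalr. fold M in Hid. rewrite <- Hid. field. split; apply Rgt_not_eq; lra.
  - replace (dot Q eta b - eps * dot Q rho b + eps * fsum E (fun k => pi k * M k))
      with (dot Q eta b - dot Q rho b + dot Q rho b * (1 - eps) + fsum E (fun e => M e * (eps * pi e)))
      by (rewrite (fsum_ext E _ (fun e => eps * (pi e * M e))) by (intros; ring); rewrite fsum_scal; ring).
    assert (HN : forall s, tends_to_infinity s ->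
              Un_cv (fun c => dot Q (fun q => N (s c) q / s c) b) (dot Q rho b)).
    { intros s Hsi. apply cv_dot. intros q Hq. apply (lim_infty_seq (fun t => N t q / t)); auto. }
    apply CV_plus; [apply CV_plus; [apply CV_minus|apply CV_mult]|].
    + apply cv_dot; auto.
    + apply HN, tc_inf.
    + apply HN; auto.
    + auto.
    + apply (cv_fsum E (fun e c => M e * (occupation e (sc c) (tc c) / tc c))). intros e He.
      destruct (Hpi e He) as [occ [Hocc Hlim]].
      apply CV_mult; [apply cv_const|]. apply (occupation_limit e _ occ); auto.
Qed.

End Limits.
End QueueingModel.

Theorem lemma4
  (Q E : nat) (Sset : nat -> list (nat -> R))
  (env : R -> nat) (pi : nat -> R)
  (N : R -> nat -> R) (rho : nat -> R)
  (sched : R -> nat -> R) (X : R -> nat -> R)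
  (B : nat -> nat -> R)
  (tc sc : nat -> R) (eta : nat -> R) (eps : R)
  (* queues and environment states *)
  (HQ : (1 <= Q)%nat) (HE : (1 <= E)%nat)
  (HSne : forall k, (k < E)%nat -> Sset k <> nil)
  (HScomp : forall k, (k < E)%nat -> complete Q (Sset k))
  (* environment trace *)
  (Henv_range : forall t, 0 <= t -> (env t < E)%nat)
  (Henv_meas : forall k, measurable (fun z => 0 <= z /\ env z = k))
  (Hpi : forall k, (k < E)%nat -> exists occ : R -> R,
      (forall t, 0 < t -> has_measure (fun z => 0 <= z <= t /\ env z = k) (occ t)) /\
      lim_infty (fun t => occ t / t) (pi k))
  (Hpi_pos : forall k, (k < E)%nat -> 0 < pi k)
  (Hpi_sum : fsum E pi = 1)
  (* cumulative arrivals *)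
  (HN_nonneg : forall t q, 0 <= t -> (q < Q)%nat -> 0 <= N t q)
  (HN_mono : forall t1 t2 q, 0 <= t1 <= t2 -> (q < Q)%nat -> N t1 q <= N t2 q)
  (HN_left : forall t q, 0 < t -> (q < Q)%nat -> exists l, forall e', 0 < e' ->
      exists d, 0 < d /\ forall z, t - d < z < t -> Rabs (N z q - l) < e')
  (Hrho_lim : forall q, (q < Q)%nat -> lim_infty (fun t => N t q / t) (rho q))
  (* schedule *)
  (Hsched_in : forall t, 0 <= t -> inS Q (Sset (env t)) (sched t))
  (Hsched_meas : forall q c, (q < Q)%nat ->
      measurable (fun z => 0 <= z /\ sched z q = c))
  (* workload X(t) = X(0) + N(t) - int_0^t S(z) dz >= 0 *)
  (HX : forall t q, 0 <= t -> (q < Q)%nat ->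
      simple_integral (fun z => sched z q) 0 t (X 0 q + N t q - X t q))
  (HX_nonneg : forall t q, 0 <= t -> (q < Q)%nat -> 0 <= X t q)
  (* the matrix B *)
  (HB_sym : forall p q, (p < Q)%nat -> (q < Q)%nat -> B p q = B q p)
  (HB_pd : forall x : nat -> R, (exists q, (q < Q)%nat /\ x q <> 0) ->
      0 < dot Q x (mulmv Q B x))
  (HB_off : forall p q, (p < Q)%nat -> (q < Q)%nat -> p <> q -> B p q <= 0)
  (* load in the stability region *)
  (Hrho : in_region Q E Sset pi rho)
  (* the times t_c *)
  (Ht_nonneg : forall c, 0 <= tc c)
  (Ht_incr : forall c, tc c < tc (S c))
  (Ht_unb : forall M, exists c, M < tc c)
  (Heta : forall q, (q < Q)%nat -> Un_cv (fun c => X (tc c) q / tc c) (eta q))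
  (Heta_nz : exists q, (q < Q)%nat /\ eta q <> 0)
  (* the times s_c *)
  (Hs : forall c, 0 <= sc c < tc c)
  (Heps : Un_cv (fun c => (tc c - sc c) / tc c) eps)
  (Heps01 : 0 < eps < 1)
  (Hgreedy : forall c, null (fun z => sc c < z <= tc c /\
      ~ (forall S', In S' (Sset (env z)) ->
           dot Q S' (mulmv Q B eta) <= dot Q (sched z) (mulmv Q B eta)))) :
  (exists (phi : nat -> nat) (psi : nat -> R),
      (forall d, (phi d < phi (S d))%nat) /\
      (forall q, (q < Q)%nat -> 0 <= psi q) /\
      (forall q, (q < Q)%nat -> Un_cv (fun d => X (sc (phi d)) q / sc (phi d)) (psi q)) /\
      dot Q psi (mulmv Q B eta) > dot Q eta (mulmv Q B eta) /\
      dot Q psi (mulmv Q B psi) > dot Q eta (mulmv Q B eta)) /\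
  limsup_infty_gt (fun t => dot Q (fun q => X t q / t) (mulmv Q B (fun q => X t q / t)))
                  (dot Q eta (mulmv Q B eta)).
Proof.
  set (b := mulmv Q B eta). set (a := dot Q eta b).
  assert (Ha : 0 < a) by (apply HB_pd; auto).
  assert (Htpos : forall c, 0 < tc c) by (intros c; destruct (Hs c); lra).
  assert (Hratio : Un_cv (fun c => sc c / tc c) (1 - eps)).
  { apply cv_ext_ev with (u := fun c => 1 - (tc c - sc c) / tc c) (c0 := 0%nat);
      [intros c _; field; apply Rgt_not_eq, Htpos|apply CV_minus; [apply cv_const|auto]]. }
  assert (Hsinf : tends_to_infinity sc)
    by (apply (tends_to_infinity_ratio sc tc (1 - eps)); [apply increasing_unbounded| |auto|lra]; auto).
  (* <X(s_c), b> / t_c --> L with L >= a by the stability-region bound *)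
  pose proof (weighted_workload_limit Q E Sset env N X sched b HQ HSne Henv_range Henv_meas
                Hsched_in Hsched_meas HX tc sc eps Hs Hsinf Hratio eta rho pi
                Heta Hrho_lim Hpi Hgreedy) as HL.
  pose proof (region_greedy_bound Q E Sset pi rho b HScomp Hpi_pos Hrho) as Hregion.
  (* a convergent subsequence X(s_d)/s_d --> psi, with <psi, b> (1 - eps) = L *)
  destruct (scaled_workload_subsequence Q E Sset env N X sched HQ Henv_range Hsched_in Hsched_meas
              HX HX_nonneg sc rho Hsinf Hrho_lim) as [phi [psi [Hphi [Hpsi0 Hpsi]]]].
  pose proof (rescaled_dot_limit Q (fun c => X (sc c)) sc tc phi psi b _ _
                Hphi Hsinf Htpos HL Hratio Hpsi) as Hpsib.
  assert (Hgt1 : dot Q psi b > a).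
  { assert (HLa : a <= dot Q psi b * (1 - eps)) by (rewrite Hpsib; unfold a; nra). nra. }
  (* <psi, B psi> >= 2 <psi, b> - a > a *)
  assert (Hgt2 : dot Q psi (mulmv Q B psi) > a)
    by (pose proof (quad_tangent_bound Q B psi eta HB_sym HB_pd) as Ht; fold b a in Ht; lra).
  split.
  - exists phi, psi. repeat split; auto.
  - apply (limsup_of_sequence _ (fun d => sc (phi d)) (dot Q psi (mulmv Q B psi)));
      [apply tends_to_infinity_sub|apply cv_quad|]; auto.
Qed.
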